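(* Let $A$ and $B$ be commutative associative unital algebras over $\mathbb{C}$ or $\mathbb{R}$, let $n\ge 0$ be an integer, and let $\mathbf{f}\colon A\to B$ be an $n$-homomorphism. Then for every $a\in A$, $$\operatorname{ber}_{\mathbf{f}}(a)=\psi_n(\mathbf{f},a),$$ where $\operatorname{ber}_{\mathbf{f}}(a)=1+\psi_1(\mathbf{f},a-1)+\psi_2(\mathbf{f},a-1)+\dots+\psi_n(\mathbf{f},a-1)$.
   Context: For a linear map $\mathbf{f}\colon A\to B$, its characteristic function is the formal power series $R(\mathbf{f},a,z)=\exp\bigl(\mathbf{f}(\ln(1+az))\bigr)\in B[[z]]$, where $\ln(1+az)=\sum_{k\ge1}(-1)^{k-1}a^kz^k/k$ and $\mathbf{f}$ is applied coefficientwise; write $R(\mathbf{f},a,z)=1+\psi_1(\mathbf{f},a)z+\psi_2(\mathbf{f},a)z^2+\cdots$. Equivalently, $\psi_1(\mathbf{f},a)=\mathbf{f}(a)$ and $\psi_{k+1}(\mathbf{f},a)=\frac{1}{k+1}\bigl(\mathbf{f}(a)\psi_k(\mathbf{f},a)-\mathbf{f}(a^2)\psi_{k-1}(\mathbf{f},a)+\mathbf{f}(a^3)\psi_{k-2}(\mathbf{f},a)-\cdots\bigr)$, with $\psi_0=1$. A linear map $\mathbf{f}$ is an $n$-homomorphism if $\mathbf{f}(1)=n$ and $R(\mathbf{f},a,z)$ is a polynomial in $z$ of degree at most $n$ for every $a\in A$ (i.e. $\psi_k(\mathbf{f},a)=0$ for all $k>n$ and all $a$). For such $\mathbf{f}$,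 the $\mathbf{f}$-Berezinian is $\operatorname{ber}_{\mathbf{f}}(a)=\exp\mathbf{f}(\ln a):=R(\mathbf{f},a-1,1)=\sum_{k=0}^{n}\psi_k(\mathbf{f},a-1)$. *)

From HB Require Import structures.
From mathcomp Require Import all_boot all_order all_algebra.
Set Implicit Arguments. Unset Strict Implicit. Unset Printing Implicit Defensive.
Import Order.TTheory GRing.Theory Num.Theory.
Local Open Scope ring_scope.

Section Psi.
Variables (K : numFieldType) (A B : comAlgType K).

Fixpoint psis (f : A -> B) (a : A) (k : nat) : seq B :=
  match k with
  | 0 => [:: 1]
  | k'.+1 =>
      let s := psis f a k' in
      rcons s ((k'.+1)%:R^-1 *:
                 \sum_(i < k'.+1) ((-1) ^+ i * f (a ^+ i.+1) * nth 0 s (k' - i)))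
  end.

Definition psi (f : A -> B) (a : A) (k : nat) : B := nth 0 (psis f a k) k.

Definition is_n_hom (n : nat) (f : A -> B) : Prop :=
  f 1 = n%:R /\ forall (a : A) (k : nat), (n < k)%N -> psi f a k = 0.

Definition ber (n : nat) (f : A -> B) (a : A) : B :=
  \sum_(k < n.+1) psi f (a - 1) k.

End Psi.

(* Write b = a - 1 and w = z/(1 + z). As formal series ln(1 + az) = ln(1 + z) + ln(1 + bw), so
   f(1) = n gives R(f,a,z) = (1 + z)^n R(f,b,w); since (1 + z)^n w^k = z^k (1 + z)^(n-k), the
   coefficient of z^n on the right is psi_0(f,b) + ... + psi_n(f,b). To avoid exponentials, both
   sides are compared through the differential equation S' = f(a/(1 + az)) S, S(0) = 1, whose
   solution modulo z^(n+1) has coefficients psi_k(f,a) by the Newton recursion. All series are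
   polynomials truncated modulo a power of z. *)

From HB Require Import structures.
From Stdlib Require Import Setoid Morphisms.
From mathcomp Require Import all_boot all_order all_algebra.
From mathcomp Require Import ring.
Set Implicit Arguments. Unset Strict Implicit. Unset Printing Implicit Defensive.
Import GRing.Theory Num.Theory.
Local Open Scope ring_scope.

Section PsiRecursion.
Variables (K : numFieldType) (A B : comAlgType K) (f : A -> B) (a : A).

Lemma size_psis k : size (psis f a k) = k.+1.
Proof. by elim: k => //= k IHk; rewrite size_rcons IHk. Qed.

Lemma nth_psis k j : (j <= k)%N -> nth 0 (psis f a k) j = psi f a j.
Proof.
elim: k => [|k IHk]; first by rewrite leqn0 => /eqP ->.
rewrite leq_eqVlt => /predU1P[-> //|ltjk].
by rewrite /= nth_rcons size_psis ltjk IHk.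
Qed.

Lemma psi_newton k : psi f a k.+1 *+ k.+1 =
  \sum_(i < k.+1) (-1) ^+ i * f (a ^+ i.+1) * psi f a (k - i).
Proof.
rewrite /psi /= nth_rcons size_psis ltnn eqxx -scaler_nat scalerA mulfV.
  by rewrite scale1r; apply: eq_bigr => i _; rewrite nth_psis ?leq_subr.
by rewrite pnatr_eq0.
Qed.

End PsiRecursion.

Section TruncatedEquality.
Variable R : nzRingType.
Implicit Types p q r s : {poly R}.

Definition eqmodX m p q := forall i, (i < m)%N -> p`_i = q`_i.

#[export] Instance eqmodX_equiv m : Equivalence (eqmodX m).
Proof.
split=> [p i _ //|p q eqpq i lt_im|p q r eqpq eqqr i lt_im].
  by rewrite eqpq.
by rewrite eqpq ?eqqr.
Qed.

#[export] Instance eqmodX_add m :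
  Proper (eqmodX m ==> eqmodX m ==> eqmodX m) (@GRing.add {poly R}).
Proof. by move=> p q eqpq r s eqrs i lt_im; rewrite !coefD eqpq ?eqrs. Qed.

#[export] Instance eqmodX_opp m : Proper (eqmodX m ==> eqmodX m) (@GRing.opp {poly R}).
Proof. by move=> p q eqpq i lt_im; rewrite !coefN eqpq. Qed.

#[export] Instance eqmodX_mul m :
  Proper (eqmodX m ==> eqmodX m ==> eqmodX m) (@GRing.mul {poly R}).
Proof.
move=> p q eqpq r s eqrs i lt_im; rewrite !coefM; apply: eq_bigr => j _.
have lt_jm : (j < m)%N by apply: leq_ltn_trans lt_im; rewrite -ltnS.
by rewrite eqpq // eqrs // (leq_ltn_trans (leq_subr _ _) lt_im).
Qed.

#[export] Instance eqmodX_exp m :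
  Proper (eqmodX m ==> eq ==> eqmodX m) (@GRing.exp {poly R}).
Proof.
move=> p q eqpq _ k ->; elim: k => [|k IHk]; first by rewrite !expr0.
by rewrite !exprS; apply: eqmodX_mul.
Qed.

#[export] Instance eqmodX_natmul m :
  Proper (eqmodX m ==> eq ==> eqmodX m) (@GRing.natmul {poly R}).
Proof. by move=> p q eqpq _ k -> i lt_im; rewrite !coefMn eqpq. Qed.

Lemma eqmodX_le k m p q : (k <= m)%N -> eqmodX m p q -> eqmodX k p q.
Proof. by move=> le_km eqpq i lt_ik; apply: eqpq (leq_trans lt_ik le_km). Qed.

Lemma eqmodX_deriv m p q : eqmodX m.+1 p q -> eqmodX m p^`() q^`().
Proof. by move=> eqpq i lt_im; rewrite !coef_deriv eqpq. Qed.

End TruncatedEquality.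

Section TruncatedEqualityCom.
Variable R : comNzRingType.
Implicit Types p q u v w : {poly R}.

Lemma eqmodX_comp m p q w :
  w`_0 = 0 -> eqmodX m p q -> eqmodX m (p \Po w) (q \Po w).
Proof.
move=> w0 eqpq.
have {}w0 : w = drop_poly 1 w * 'X.
  rewrite -[LHS](poly_take_drop 1) expr1 [take_poly 1 w](_ : _ = 0) ?add0r //.
  by apply/polyP => -[|i]; rewrite coef_take_poly coef0.
have low_pq : take_poly m (p - q) = 0.
  apply/polyP => i; rewrite coef_take_poly coefB coef0.
  by case: ifP => // /eqpq ->; rewrite subrr.
rewrite -[p](subrK q) -(poly_take_drop m (p - q)) low_pq add0r => i lt_im.
rewrite comp_polyD comp_polyM rmorphXn /= comp_polyX w0 exprMn.
by rewrite coefD mulrA coefMXn lt_im add0r.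
Qed.

Lemma eqmodX_cancel m u v p q :
  eqmodX m (u * v) 1 -> eqmodX m (u * p) (u * q) -> eqmodX m p q.
Proof.
move=> uv1 eq_upq.
have cancel r : eqmodX m r (u * r * v) by rewrite mulrAC uv1 mul1r.
by rewrite (cancel p) (cancel q) eq_upq.
Qed.

End TruncatedEqualityCom.

Section GeometricSeries.
Variable R : comNzRingType.
Implicit Types (c : R) (m : nat).

Definition geom c m : {poly R} := \poly_(i < m) (- c) ^+ i.

Lemma geomP c m : eqmodX m ((c%:P * 'X + 1) * geom c m) 1.
Proof.
move=> i lt_im; rewrite mulrDl mul1r -mulrA coefD coefCM coefXM !coef_poly coef1 lt_im.
case: i lt_im => [|i] lt_im /=; first by rewrite mulr0 add0r expr0.
by rewrite (ltnW lt_im) exprS; ring.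
Qed.

(* [logder c m] truncates c/(1 + cX), the derivative of ln(1 + cX). *)
Definition logder c m : {poly R} := c%:P * geom c m.

Lemma logderP c m : eqmodX m ((c%:P * 'X + 1) * logder c m) c%:P.
Proof. by rewrite /logder mulrCA geomP mulr1. Qed.

(* Truncation of X/(1 + X). *)
Definition mobius m : {poly R} := 'X * geom 1 m.

Lemma coef0_mobius m : (mobius m)`_0 = 0.
Proof. by rewrite coefXM. Qed.

Lemma XaddC1_geom m : eqmodX m (('X + 1) * geom 1 m) 1.
Proof. by have := geomP 1 (m := m); rewrite polyC1 mul1r. Qed.

Lemma deriv_mobius m : eqmodX m (mobius m.+1)^`() (geom 1 m.+1 ^+ 2).
Proof.
set G := geom 1 m.+1; set P : {poly R} := 'X + 1.
have PG : eqmodX m (P * G) 1 := eqmodX_le (leqnSn m) (XaddC1_geom (m := m.+1)).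
have PG' : eqmodX m (P * G^`()) (- G).
  have := eqmodX_deriv (XaddC1_geom (m := m.+1)).
  rewrite derivM derivD derivX -polyC1 derivC addr0 mul1r => dPG.
  by rewrite -[P * _](addKr G) dPG addr0.
apply: (eqmodX_cancel (u := P ^+ 2) (v := G ^+ 2)); first by rewrite -exprMn PG expr1n.
rewrite -exprMn PG expr1n /mobius derivM derivX mul1r.
have -> : P ^+ 2 * (G + 'X * G^`()) = P * G * P + 'X * P * (P * G^`()) by ring.
rewrite PG' PG.
have -> : 1 * P + 'X * P * - G = P - 'X * (P * G) by ring.
by rewrite PG mulr1 /P addrAC subrr add0r.
Qed.

Lemma coef_XaddC1_exp m : (('X + 1 : {poly R}) ^+ m)`_m = 1.
Proof.
have -> : 'X + 1 = 'X - (-1)%:P :> {poly R} by rewrite polyCN opprK polyC1.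
have /monicP := monic_exp m (monicXsubC (-1 : R)).
by rewrite lead_coefE size_exp_XsubC.
Qed.

Lemma XaddC1_mobius n k : (k <= n)%N ->
  eqmodX n.+1 (('X + 1) ^+ n * mobius n.+1 ^+ k) ('X^k * ('X + 1) ^+ (n - k)).
Proof.
move=> le_kn.
have -> : ('X + 1) ^+ n * mobius n.+1 ^+ k =
    'X^k * ('X + 1) ^+ (n - k) * (('X + 1) * geom 1 n.+1) ^+ k.
  by rewrite /mobius -{1}(subnK le_kn) exprD !exprMn; ring.
by rewrite XaddC1_geom expr1n mulr1.
Qed.

(* Derivative of ln(1 + cX) = ln(1 + X) + ln(1 + (c - 1) w) with w = X/(1 + X),
   since w' = 1/(1 + X)^2. *)
Lemma logder_mobius c n M : (n <= M)%N ->
  eqmodX n (logder c n) (geom 1 M + geom 1 M ^+ 2 * (logder (c - 1) n \Po mobius M)).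
Proof.
move=> le_nM; set G := geom 1 M; set w := mobius M; set d := c - 1.
have PG : eqmodX n (('X + 1) * G) 1 := eqmodX_le le_nM (XaddC1_geom (m := M)).
have dL : eqmodX n ((d%:P * w + 1) * (logder d n \Po w)) d%:P.
  have := eqmodX_comp (coef0_mobius M) (logderP d (m := n)).
  by rewrite comp_polyM comp_polyD comp_polyM comp_polyX !comp_polyC polyC1.
have cX1 : eqmodX n (c%:P * 'X + 1) (('X + 1) * (d%:P * w + 1)).
  have -> : ('X + 1) * (d%:P * w + 1) = 'X + 1 + d%:P * 'X * (('X + 1) * G).
    by rewrite /w /mobius -/G; ring.
  rewrite PG mulr1 /d polyCB polyC1.
  by have -> : 'X + 1 + (c%:P - 1) * 'X = c%:P * 'X + 1 by ring.
apply: (eqmodX_cancel (geomP c (m := n))); rewrite logderP cX1.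
have -> : ('X + 1) * (d%:P * w + 1) * (G + G ^+ 2 * (logder d n \Po w)) =
    ('X + 1) * G * (d%:P * w + 1) + ('X + 1) * G * G * ((d%:P * w + 1) * (logder d n \Po w)).
  by ring.
rewrite PG dL.
have -> : 1 * (d%:P * w + 1) + 1 * G * d%:P = d%:P * (('X + 1) * G) + 1.
  by rewrite /w /mobius -/G; ring.
by rewrite PG mulr1 /d polyCB polyC1 subrK.
Qed.

End GeometricSeries.

Lemma map_geom (R S : comNzRingType) (g : {rmorphism R -> S}) (c : R) m :
  map_poly g (geom c m) = geom (g c) m.
Proof.
apply/polyP => i; rewrite coef_map !coef_poly.
by case: ifP => _; rewrite /= ?rmorph0 // rmorphXn rmorphN.
Qed.

Lemma map_mobius (R S : comNzRingType) (g : {rmorphism R -> S}) m :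
  map_poly g (mobius R m) = mobius S m.
Proof. by rewrite rmorphM /= map_polyX map_geom rmorph1. Qed.

Section LinearMapPoly.
Variables (K : comNzRingType) (A B : comAlgType K) (f : {linear A -> B}).

#[export] Instance eqmodX_map_poly m : Proper (eqmodX m ==> eqmodX m) (map_poly f).
Proof. by move=> p q eqpq i lt_im; rewrite !coef_map eqpq. Qed.

Lemma map_poly_in_alg (q : {poly K}) :
  map_poly f (map_poly (in_alg A) q) = map_poly (in_alg B) q * (f 1)%:P.
Proof.
by apply/polyP => i; rewrite coefMC !coef_map /= linearZ mulr_algl.
Qed.

Lemma map_poly_mul_alg (p : {poly A}) (q : {poly K}) :
  map_poly f (p * map_poly (in_alg A) q) = map_poly f p * map_poly (in_alg B) q.
Proof.
apply/polyP => i; rewrite coef_map !coefM raddf_sum; apply: eq_bigr => j _.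
by rewrite !coef_map /= !mulr_algr linearZ.
Qed.

Lemma map_poly_comp_alg (p : {poly A}) (q : {poly K}) :
  map_poly f (p \Po map_poly (in_alg A) q) = map_poly f p \Po map_poly (in_alg B) q.
Proof.
elim/poly_ind: p => [|p c IHp]; first by rewrite comp_poly0 !raddf0.
rewrite comp_polyD comp_polyM comp_polyX comp_polyC !raddfD /= map_poly_mul_alg IHp.
rewrite !map_polyC -[X in map_poly f (p * X)](map_polyX (in_alg A)) map_poly_mul_alg.
by rewrite map_polyX comp_polyM comp_polyX comp_polyC.
Qed.

End LinearMapPoly.

Section PsiOde.
Variables (K : numFieldType) (A B : comAlgType K) (f : {linear A -> B}) (n : nat).

Definition psi_poly (b : A) : {poly B} := \poly_(k < n.+1) psi f b k.

Lemma coef_map_logder a j :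
  (j < n)%N -> (map_poly f (logder a n))`_j = (-1) ^+ j * f (a ^+ j.+1).
Proof.
move=> lt_jn; rewrite coef_map coefCM coef_poly lt_jn [(- a) ^+ j]exprNn /=.
by rewrite mulrCA -exprS raddfMsign.
Qed.

Lemma psi_poly_ode b :
  eqmodX n (psi_poly b)^`() (map_poly f (logder b n) * psi_poly b).
Proof.
move=> i lt_in; rewrite coef_deriv coef_poly ltnS lt_in psi_newton coefM.
apply: eq_bigr => j _; have le_ji : (j <= i)%N := ltn_ord j.
rewrite coef_map_logder ?coef_poly ?(leq_ltn_trans le_ji) //.
by rewrite ltnS (leq_trans (leq_subr _ _) (ltnW lt_in)).
Qed.

Lemma psi_ode_unique a (S : {poly B}) :
  S`_0 = 1 -> eqmodX n S^`() (map_poly f (logder a n) * S) ->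
  forall k, (k <= n)%N -> S`_k = psi f a k.
Proof.
move=> S0 S_ode; elim/ltn_ind => -[_ _|k IHk lt_kn]; first exact: S0.
apply: (@scalerI _ _ (k.+1%:R : K)); first by rewrite pnatr_eq0.
rewrite !scaler_nat -coef_deriv S_ode // psi_newton coefM; apply: eq_bigr => j _.
have le_jk : (j <= k)%N := ltn_ord j.
rewrite coef_map_logder ?(leq_ltn_trans le_jk) // IHk ?ltnS ?leq_subr //.
by rewrite (leq_trans (leq_subr _ _) (ltnW lt_kn)).
Qed.

End PsiOde.

Section ShiftedPsi.
Variables (K : numFieldType) (A B : comAlgType K) (f : {linear A -> B}) (n : nat).
Hypothesis f1 : f 1 = n%:R.

Lemma map_logder_mobius a :
  eqmodX n (map_poly f (logder a n))
    (geom 1 n.+1 *+ n + geom 1 n.+1 ^+ 2 * (map_poly f (logder (a - 1) n) \Po mobius B n.+1)).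
Proof.
have GA : geom (1 : A) n.+1 = map_poly (in_alg A) (geom 1 n.+1) by rewrite map_geom rmorph1.
have GB : geom (1 : B) n.+1 = map_poly (in_alg B) (geom 1 n.+1) by rewrite map_geom rmorph1.
have wA : mobius A n.+1 = map_poly (in_alg A) (mobius K n.+1) by rewrite map_mobius.
have wB : mobius B n.+1 = map_poly (in_alg B) (mobius K n.+1) by rewrite map_mobius.
rewrite (logder_mobius a (leqnSn n)) raddfD /= GA wA map_poly_in_alg f1 polyC_natr mulr_natr.
rewrite mulrC -rmorphXn map_poly_mul_alg map_poly_comp_alg.
by rewrite rmorphXn /= -GB -wB mulrC.
Qed.

Definition shifted_psi (b : A) : {poly B} :=
  ('X + 1) ^+ n * (psi_poly f n b \Po mobius B n.+1).

Lemma coef0_shifted_psi b : (shifted_psi b)`_0 = 1.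
Proof.
rewrite -horner_coef0 hornerM horner_comp [(mobius _ _).[0]]horner_coef0 coef0_mobius.
by rewrite [(psi_poly _ _ _).[0]]horner_coef0 coef_poly !hornerE expr1n.
Qed.

Lemma shifted_psi_ode a :
  eqmodX n (shifted_psi (a - 1))^`() (map_poly f (logder a n) * shifted_psi (a - 1)).
Proof.
set G := geom (1 : B) n.+1; set w := mobius B n.+1; set P := psi_poly f n (a - 1).
set L := map_poly f (logder (a - 1) n).
have PG : eqmodX n (('X + 1) * G) 1 := eqmodX_le (leqnSn n) (XaddC1_geom B (m := n.+1)).
have dXn : eqmodX n (('X + 1) ^+ n.-1 *+ n) (('X + 1) ^+ n * G *+ n).
  case: (posnP n) => [-> | n_gt0]; first by rewrite !mulr0n.
  have -> : ('X + 1) ^+ n * G = ('X + 1) ^+ n.-1 * (('X + 1) * G).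
    by rewrite mulrA -exprSr prednK.
  by rewrite PG mulr1.
rewrite /shifted_psi derivM deriv_comp deriv_exp derivD derivX -polyC1 derivC addr0 mul1r.
rewrite dXn (eqmodX_comp (coef0_mobius B n.+1) (psi_poly_ode f (a - 1))) comp_polyM.
rewrite (deriv_mobius B (m := n)) (map_logder_mobius a) -/G -/w -/L -/P.
have -> : (G *+ n + G ^+ 2 * (L \Po w)) * (('X + 1) ^+ n * (P \Po w)) =
    ('X + 1) ^+ n * G *+ n * (P \Po w) + ('X + 1) ^+ n * ((L \Po w) * (P \Po w) * G ^+ 2).
  by ring.
done.
Qed.

Lemma coef_shifted_psi b : (shifted_psi b)`_n = \sum_(k < n.+1) psi f b k.
Proof.
rewrite /shifted_psi /psi_poly poly_def raddf_sum mulr_sumr coef_sum.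
apply: eq_bigr => k _; have le_kn : (k <= n)%N := ltn_ord k.
rewrite /= comp_polyZ -scalerAr coefZ rmorphXn /= comp_polyX.
by rewrite (XaddC1_mobius B le_kn (ltnSn n)) coefXnM ltnNge le_kn coef_XaddC1_exp mulr1.
Qed.

End ShiftedPsi.

Theorem mainTheorem1 (K : numFieldType) (A B : comAlgType K) (n : nat)
    (f : {linear A -> B}) :
  is_n_hom n f -> forall a : A, ber n f a = psi f a n.
Proof.
move=> [f1 _] a; rewrite /ber -coef_shifted_psi.
apply: psi_ode_unique (leqnn n).
- exact: coef0_shifted_psi.
- exact: shifted_psi_ode f1 a.
Qed.
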